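(* If $(X,\Pi)$ is a finite quasiconcave quasisubmodular aggregative game for which a fESS exists, then imitation is not subject to a money pump.
   Context: An aggregative game $(X,\Pi)$ consists of: a totally ordered action set $X$ and a totally ordered set $Z$; a symmetric aggregator $a:X\times X\to Z$ ($a(x,y)=a(y,x)$) that is monotone increasing (if $x''\ge x'$, $y''\ge y'$ and $(x'',y'')\neq(x',y')$ then $a(x'',y'')>a(x',y')$); and $\Pi:X\times Z\to\mathbb{R}$; the underlying symmetric two-player game has payoff $\pi(x,y)=\Pi(x,a(x,y))$. Finite means $X$ finite. Quasisubmodular: for all $z''>z'$ and $x''>x'$, $\Pi(x'',z'')-\Pi(x',z'')\ge0\Rightarrow\Pi(x'',z')-\Pi(x',z')\ge0$ and the same with $>0$ in both places. Quasiconcave: for all $x<x'<x''$ and $z$, $\Pi(x',z)\ge\min\{\Pi(x,z),\Pi(x'',z)\}$. fESS: $x^*$ with $\Pi(x^*,a(x^*,x))\ge\Pi(x,a(x^*,x))$ for all $x\in X$. Relative payoff: $\Delta(x,y)=\pi(x,y)-\pi(y,x)$. Imitate-the-best: given initial $y_0\in X$ and any opponent sequence $(x_t)_{t\ge0}$, $y_t=x_{t-1}$ if $\Delta(x_{t-1},y_{t-1})>0$ and $y_t=y_{t-1}$ otherwise. Imitation is not subject to a money pump if there is $M\in\mathbb{R}_+$ such that for every $y_0\in X$ and every sequence $(x_t)$, $\limsup_{T\to\infty}\sum_{t=0}^T\Delta(x_t,y_t)\le M$. *)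

From HB Require Import structures.
From mathcomp Require Import all_boot all_order all_algebra.
From mathcomp Require Import all_classical all_reals all_analysis.
Set Implicit Arguments. Unset Strict Implicit. Unset Printing Implicit Defensive.
Import Order.TTheory GRing.Theory Num.Theory.
Local Open Scope ring_scope.

Section Defs.
Context {R : realType} {dX dZ : Order.disp_t}
  {X : finOrderType dX} {Z : orderType dZ}.

Definition agg_symmetric (a : X -> X -> Z) : Prop :=
  forall x y, a x y = a y x.

Definition agg_monotone (a : X -> X -> Z) : Prop :=
  forall x' x'' y' y'', (x' <= x'')%O -> (y' <= y'')%O ->
    (x'', y'') <> (x', y') -> (a x' y' < a x'' y'')%O.

Definition quasisubmodular (Pi : X -> Z -> R) : Prop :=
  forall (z' z'' : Z) (x' x'' : X), (z' < z'')%O -> (x' < x'')%O ->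
    (0 <= Pi x'' z'' - Pi x' z'' -> 0 <= Pi x'' z' - Pi x' z') /\
    (0 < Pi x'' z'' - Pi x' z'' -> 0 < Pi x'' z' - Pi x' z').

Definition quasiconcave (Pi : X -> Z -> R) : Prop :=
  forall (x x' x'' : X) (z : Z), (x < x')%O -> (x' < x'')%O ->
    Num.min (Pi x z) (Pi x'' z) <= Pi x' z.

Definition payoff (a : X -> X -> Z) (Pi : X -> Z -> R) (x y : X) : R :=
  Pi x (a x y).

Definition fESS (a : X -> X -> Z) (Pi : X -> Z -> R) (xs : X) : Prop :=
  forall x : X, Pi x (a xs x) <= Pi xs (a xs x).

Definition rel_payoff (a : X -> X -> Z) (Pi : X -> Z -> R) (x y : X) : R :=
  payoff a Pi x y - payoff a Pi y x.

Fixpoint imitate (a : X -> X -> Z) (Pi : X -> Z -> R) (y0 : X)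
    (xs : nat -> X) (t : nat) : X :=
  match t with
  | 0 => y0
  | t'.+1 => let y := imitate a Pi y0 xs t' in
             if 0 < rel_payoff a Pi (xs t') y then xs t' else y
  end.

Definition no_money_pump (a : X -> X -> Z) (Pi : X -> Z -> R) : Prop :=
  exists M : R, 0 <= M /\
    forall (y0 : X) (xs : nat -> X),
      (limn_esup (fun T : nat =>
         ((\sum_(0 <= t < T.+1) rel_payoff a Pi (xs t) (imitate a Pi y0 xs t))%:E))
       <= M%:E)%E.

End Defs.

From HB Require Import structures.
From mathcomp Require Import all_boot all_order all_algebra.
From mathcomp Require Import all_classical all_reals all_analysis.
Set Implicit Arguments. Unset Strict Implicit. Unset Printing Implicit Defensive.
Import Order.TTheory GRing.Theory Num.Theory.
Local Open Scope ring_scope.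

(* Let s be an fESS.  An improving imitation move never leaves s, and from any
   other state it goes strictly toward s (possibly jumping over it).
   Quasiconcavity and quasisubmodularity forbid an upward improving move p -> M
   and a downward one q -> m to cross, i.e. to satisfy m <= p < q <= M.  Hence
   the imitated states spiral in around s and never repeat, so each pair
   (opponent's action, own action) produces a positive relative payoff at most
   once, and every cumulative relative payoff is bounded by the sum of |Delta|
   over all pairs of actions. *)

Lemma limn_esup_le (R : realType) (u : (\bar R)^nat) (M : \bar R) :
  (forall n, u n <= M)%E -> (limn_esup u <= M)%E.
Proof.
move=> uM; rewrite limn_esup_lim; apply: lime_le; first exact: is_cvg_esups.
by apply: nearW => n; apply: ub_ereal_sup => _ [k _ <-].
Qed.

Section Quasiconcave.
Variables (R : realType) (dX dZ : Order.disp_t)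
  (X : finOrderType dX) (Z : orderType dZ) (Pi : X -> Z -> R).
Hypothesis Pi_qc : quasiconcave Pi.

Lemma quasiconcave_ge (c : R) (x x' x'' : X) (z : Z) : (x < x')%O -> (x' < x'')%O ->
  c <= Pi x z -> c <= Pi x'' z -> c <= Pi x' z.
Proof.
move=> xx' x'x'' cx cx''; apply: le_trans (Pi_qc z xx' x'x'').
by rewrite le_min cx cx''.
Qed.

Lemma quasiconcave_no_zigzag (m p q M : X) (z : Z) :
  (m <= p)%O -> (p < q)%O -> (q <= M)%O ->
  Pi p z < Pi M z -> Pi q z < Pi m z -> False.
Proof.
move=> mp pq qM pM qm.
have qp : Pi q z <= Pi p z.
  have [<-|m_neq_p] := eqVneq m p; first exact: ltW.
  by apply: (quasiconcave_ge _ pq (ltW qm) (lexx _)); rewrite lt_neqAle m_neq_p.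
have [q_eq_M|q_neq_M] := eqVneq q M; first by move: pM; rewrite -q_eq_M ltNge qp.
have qM' : (q < M)%O by rewrite lt_neqAle q_neq_M.
have := Pi_qc z (le_lt_trans mp pq) qM'.
by rewrite ge_min !leNgt qm (le_lt_trans qp pM).
Qed.

End Quasiconcave.

Section AggregativeGame.
Variables (R : realType) (dX dZ : Order.disp_t)
  (X : finOrderType dX) (Z : orderType dZ)
  (a : X -> X -> Z) (Pi : X -> Z -> R).
Hypotheses (a_sym : agg_symmetric a) (a_mono : agg_monotone a).
Hypotheses (Pi_qc : quasiconcave Pi) (Pi_qsm : quasisubmodular Pi).

Local Notation D := (rel_payoff a Pi).

Lemma rel_payoffE x y : D x y = Pi x (a x y) - Pi y (a x y).
Proof. by rewrite /rel_payoff /payoff (a_sym y x). Qed.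

Lemma rel_payoff_gt0 x y : (0 < D x y) = (Pi y (a x y) < Pi x (a x y)).
Proof. by rewrite rel_payoffE subr_gt0. Qed.

Lemma rel_payoffxx x : D x x = 0.
Proof. by rewrite rel_payoffE subrr. Qed.

Lemma improvements_do_not_cross (m p q M : X) :
  (m <= p)%O -> (p < q)%O -> (q <= M)%O -> 0 < D M p -> 0 < D m q -> False.
Proof.
move=> mp pq qM; rewrite !rel_payoff_gt0 (a_sym M p) => up down.
apply: (quasiconcave_no_zigzag Pi_qc mp pq qM _ down).
have [|mq_neq_pM] := eqVneq (m, q) (p, M); first by case=> -> ->.
have z_lt : (a m q < a p M)%O.
  by apply: (a_mono mp qM) => pM_eq; rewrite pM_eq eqxx in mq_neq_pM.
by have := (Pi_qsm z_lt (lt_le_trans pq qM)).2; rewrite !subr_gt0; apply.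
Qed.

Definition sum_abs_rel_payoff : R := \sum_(pr : X * X) `|D pr.1 pr.2|.

Section FiniteESS.
Variable s : X.
Hypothesis s_fESS : fESS a Pi s.

Lemma rel_payoff_fESS x : D x s <= 0.
Proof. by rewrite rel_payoffE (a_sym x s) subr_le0. Qed.

Lemma rel_payoff_le0_below x y : (x < y)%O -> (y <= s)%O -> D x y <= 0.
Proof.
move=> xy; have [-> _|y_neq_s ys] := eqVneq y s; first exact: rel_payoff_fESS.
have {}ys : (y < s)%O by rewrite lt_neqAle y_neq_s.
have z_lt : (a x y < a x s)%O.
  by apply: a_mono (lexx _) (ltW ys) _; case=> s_eq; rewrite s_eq eqxx in y_neq_s.
have x_le_s : Pi x (a x y) <= Pi s (a x y).
  have := (Pi_qsm z_lt (lt_trans xy ys)).1; rewrite !subr_ge0; apply.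
  by rewrite (a_sym x s).
by rewrite rel_payoffE subr_le0; apply: (quasiconcave_ge Pi_qc xy ys _ x_le_s).
Qed.

Lemma rel_payoff_le0_above x y : (s <= y)%O -> (y < x)%O -> D x y <= 0.
Proof.
have [-> _ _|y_neq_s sy yx] := eqVneq y s; first exact: rel_payoff_fESS.
have {}sy : (s < y)%O by rewrite lt_neqAle eq_sym y_neq_s.
have z_lt : (a s x < a x y)%O.
  rewrite (a_sym x y).
  by apply: a_mono (ltW sy) (lexx _) _; case=> y_eq; rewrite y_eq eqxx in y_neq_s.
have x_le_s : Pi x (a x y) <= Pi s (a x y).
  rewrite leNgt -subr_gt0; apply/negP => /((Pi_qsm z_lt (lt_trans sy yx)).2).
  by rewrite subr_gt0 ltNge s_fESS.
by rewrite rel_payoffE subr_le0; apply: (quasiconcave_ge Pi_qc sy yx x_le_s).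
Qed.

Lemma improvement_below x y : (y < s)%O -> 0 < D x y -> (y < x)%O.
Proof.
move=> ys Dxy; have [//|xy|yx] := ltgtP y x.
  by move: Dxy; rewrite ltNge rel_payoff_le0_below // ltW.
by move: Dxy; rewrite yx rel_payoffxx ltxx.
Qed.

Lemma improvement_above x y : (s < y)%O -> 0 < D x y -> (x < y)%O.
Proof.
move=> sy Dxy; have [yx|//|yx] := ltgtP y x.
  by move: Dxy; rewrite ltNge rel_payoff_le0_above // ltW.
by move: Dxy; rewrite yx rel_payoffxx ltxx.
Qed.

(* [behind y v]: the past state [v] can never be revisited from the current
   state [y].  On the side of [s] where [y] lies, [v] is farther from [s]; on
   the other side, no improving move from a state between [y] and [s] reaches
   as far as [v]. *)
Definition behind_below (y v : X) : Prop :=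
  ((v < s)%O -> (v <= y)%O) /\
  ((s < v)%O -> forall p w, (y <= p)%O -> (p < s)%O -> 0 < D w p -> (w < v)%O).

Definition behind_above (y v : X) : Prop :=
  ((s < v)%O -> (y <= v)%O) /\
  ((v < s)%O -> forall q m, (s < q)%O -> (q <= y)%O -> 0 < D m q -> (v < m)%O).

Definition behind (y v : X) : Prop :=
  ((y < s)%O -> behind_below y v) /\ ((s < y)%O -> behind_above y v).

Lemma behind_refl y : behind y y.
Proof.
split=> [ys|sy]; split=> [_|]; do ?exact: lexx.
- by move=> sy; have := lt_trans ys sy; rewrite ltxx.
- by move=> ys; have := lt_trans ys sy; rewrite ltxx.
Qed.

Lemma behind_improve y w v : 0 < D w y -> behind y v -> behind w v.
Proof.
move=> Dwy [below above].
have [ys|sy|ys] := ltgtP y s; last by move: Dwy; rewrite ys ltNge rel_payoff_fESS.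
- have yw := improvement_below ys Dwy; have [v_le_y reach_lt_v] := below ys.
  split=> [ws|sw]; split.
  + by move=> vs; exact: le_trans (v_le_y vs) (ltW yw).
  + by move=> sv p w' wp; apply: reach_lt_v sv p w' (le_trans (ltW yw) wp).
  + by move=> sv; exact: ltW (reach_lt_v sv y w (lexx _) ys Dwy).
  + move=> vs q m sq qw Dmq; apply: le_lt_trans (v_le_y vs) _.
    rewrite ltNge; apply/negP => my.
    exact: improvements_do_not_cross my (lt_trans ys sq) qw Dwy Dmq.
- have wy := improvement_above sy Dwy; have [y_le_v reach_gt_v] := above sy.
  split=> [ws|sw]; split.
  + by move=> vs; exact: ltW (reach_gt_v vs y w sy (lexx _) Dwy).
  + move=> sv p w' wp ps Dw'p; apply: lt_le_trans (y_le_v sv).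
    rewrite ltNge; apply/negP => yw'.
    exact: improvements_do_not_cross wp (lt_trans ps sy) yw' Dw'p Dwy.
  + by move=> sv; exact: le_trans (ltW wy) (y_le_v sv).
  + by move=> vs q m sq qw; apply: reach_gt_v vs q m sq (le_trans qw (ltW wy)).
Qed.

Section Trajectory.
Variables (y0 : X) (xs : nat -> X).
Local Notation Y := (imitate a Pi y0 xs).

Lemma imitateS t : Y t.+1 = if 0 < D (xs t) (Y t) then xs t else Y t.
Proof. by []. Qed.

Lemma imitate_fESS t u : Y t = s -> (t <= u)%N -> Y u = s.
Proof.
move=> Yt; elim: u => [|u IH]; first by rewrite leqn0 => /eqP <-.
rewrite leq_eqVlt ltnS => /predU1P[<- //|/IH Yu].
by rewrite imitateS Yu ltNge rel_payoff_fESS.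
Qed.

Lemma imitate_behind t i : (i <= t)%N -> behind (Y t) (Y i).
Proof.
elim: t => [|t IH]; first by rewrite leqn0 => /eqP ->; exact: behind_refl.
rewrite leq_eqVlt ltnS => /predU1P[->|/IH behind_t]; first exact: behind_refl.
by rewrite imitateS; case: ifP => // D_gt0; exact: behind_improve D_gt0 behind_t.
Qed.

Lemma imitate_improvement_new t i :
  (i <= t)%N -> 0 < D (xs t) (Y t) -> Y i != xs t.
Proof.
move=> it Dt; have [below above] := imitate_behind it.
have Yi_neq_s : Y i != s.
  apply/eqP => /imitate_fESS /(_ it) Yt.
  by move: Dt; rewrite Yt ltNge rel_payoff_fESS.
have [ts|st|ts] := ltgtP (Y t) s; last by move: Dt; rewrite ts ltNge rel_payoff_fESS.
- have [Yi_le reach_lt] := below ts; have tw := improvement_below ts Dt.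
  have [Yis|sYi|Yis] := ltgtP (Y i) s; last by rewrite Yis eqxx in Yi_neq_s.
    by rewrite lt_eqF // (le_lt_trans (Yi_le Yis) tw).
  by rewrite gt_eqF // (reach_lt sYi _ _ (lexx _) ts Dt).
- have [Yi_ge reach_gt] := above st; have wt := improvement_above st Dt.
  have [Yis|sYi|Yis] := ltgtP (Y i) s; last by rewrite Yis eqxx in Yi_neq_s.
    by rewrite lt_eqF // (reach_gt Yis _ _ st (lexx _) Dt).
  by rewrite gt_eqF // (lt_le_trans wt (Yi_ge sYi)).
Qed.

Lemma imitate_improvements_distinct t1 t2 : (t1 < t2)%N ->
  0 < D (xs t1) (Y t1) -> 0 < D (xs t2) (Y t2) -> xs t1 != xs t2.
Proof.
by move=> t12 D1 D2; have := imitate_improvement_new t12 D2; rewrite imitateS D1.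
Qed.

Lemma imitation_gain_le T : \sum_(t < T) D (xs t) (Y t) <= sum_abs_rel_payoff.
Proof.
pose improving := [pred t : 'I_T | 0 < D (xs t) (Y t)].
have improving_inj : {in improving &, injective (fun t : 'I_T => (xs t, Y t))}.
  move=> t1 t2 D1 D2 [xs_eq _].
  have [t12|t21|/val_inj //] := ltngtP t1 t2.
    by have := imitate_improvements_distinct t12 D1 D2; rewrite xs_eq eqxx.
  by have := imitate_improvements_distinct t21 D2 D1; rewrite xs_eq eqxx.
have losses_le0 : \sum_(t < T | ~~ improving t) D (xs t) (Y t) <= 0.
  by apply: sumr_le0 => t; rewrite /= -leNgt.
rewrite (bigID improving) /=; apply: le_trans (lerD (lexx _) losses_le0) _.
rewrite addr0 -(big_imset (fun pr => D pr.1 pr.2) improving_inj) /=.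
apply: le_trans (ler_sum _ (fun pr _ => ler_norm _)) _.
rewrite [X in _ <= X](bigID [in [set (xs t, Y t) | t : 'I_T in improving]]) /= lerDl.
exact: sumr_ge0.
Qed.

End Trajectory.
End FiniteESS.
End AggregativeGame.

Theorem proposition6 (R : realType) (dX dZ : Order.disp_t)
  (X : finOrderType dX) (Z : orderType dZ)
  (a : X -> X -> Z) (Pi : X -> Z -> R) :
  agg_symmetric a -> agg_monotone a ->
  quasiconcave Pi -> quasisubmodular Pi ->
  (exists xs : X, fESS a Pi xs) ->
  no_money_pump a Pi.
Proof.
move=> a_sym a_mono Pi_qc Pi_qsm [s s_fESS].
exists (sum_abs_rel_payoff a Pi); split; first exact: sumr_ge0.
move=> y0 xs; apply: limn_esup_le => T; rewrite lee_fin big_mkord.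
exact: imitation_gain_le.
Qed.
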